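(* Let $\langle D,E,e,\varepsilon\rangle$ be a restricted Priestley duality between a variety $\mathcal A$ and a category $\mathcal X$. Every morphism $\phi\colon\mathbb X\to\mathbb Y$ in $\mathcal X$ factors in $\mathcal X$ as a $\mathcal P$-surjection $\mu\colon\mathbb X\to\mathbb Z$ followed by a $\mathcal P$-embedding $\psi\colon\mathbb Z\to\mathbb Y$. Given two such factorisations $\mu_1\colon\mathbb X\to\mathbb Z_1$, $\psi_1\colon\mathbb Z_1\to\mathbb Y$ and $\mu_2\colon\mathbb X\to\mathbb Z_2$, $\psi_2\colon\mathbb Z_2\to\mathbb Y$ of $\phi$, there is an isomorphism $\gamma\colon\mathbb Z_1\to\mathbb Z_2$ in $\mathcal X$ with $\gamma\circ\mu_1=\mu_2$ and $\psi_2\circ\gamma=\psi_1$.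
   Context: $\mathcal D$: bounded distributive lattices; $\mathcal P$: Priestley spaces. Priestley duality: $H(\mathbf L)=\mathcal D(\mathbf L,\mathbf 2)$, $K(\mathbb X)=\mathcal P(\mathbb X,\mathbbm 2)$, morphisms by precomposition, unit and counit by evaluation. A restricted Priestley duality $\langle D,E,e,\varepsilon\rangle$: $\mathcal A$ a variety with a term reduct in $\mathcal D$ and forgetful functor ${}^\flat\colon\mathcal A\to\mathcal D$; $\mathcal X$ a category with functor ${}^\flat\colon\mathcal X\to\mathcal P$; $D,E$ a dual equivalence with unit $e$ and counit $\varepsilon$ such that ${}^\flat\circ D=H\circ{}^\flat$, ${}^\flat\circ E=K\circ{}^\flat$, $e_{\mathbf A}^\flat=e_{\mathbf A^\flat}$, $\varepsilon_{\mathbb X}^\flat=\varepsilon_{\mathbb X^\flat}$. A morphism $\phi$ of $\mathcal X$ is a $\mathcal P$-surjection if $\phi^\flat$ is surjective and a $\mathcal P$-embedding if $\phi^\flat$ is an embedding of Priestley spaces. *)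

From mathcomp Require Import all_boot.
Set Implicit Arguments. Unset Strict Implicit. Unset Printing Implicit Defensive.

Definition cast (T U : Type) (p : T = U) (x : T) : U :=
  match p in _ = U' return U' with erefl => x end.

Record category := Category {
  ob : Type;
  hom : ob -> ob -> Type;
  idm : forall a, hom a a;
  ccomp : forall a b c, hom b c -> hom a b -> hom a c;
  comp_assoc : forall a b c d (h : hom c d) (g : hom b c) (f : hom a b),
      ccomp h (ccomp g f) = ccomp (ccomp h g) f;
  comp_id_l : forall a b (f : hom a b), ccomp (idm b) f = f;
  comp_id_r : forall a b (f : hom a b), ccomp f (idm a) = f }.
Arguments idm {_} a.
Arguments hom : clear implicits.
Arguments ccomp {_ _ _ _} _ _.

Definition is_iso (C : category) (a b : ob C) (f : hom C a b) : Prop :=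
  exists g : hom C b a, ccomp g f = idm a /\ ccomp f g = idm b.

Record pspace := PSpace {
  pcar : Type;
  popen : (pcar -> Prop) -> Prop;
  ple : pcar -> pcar -> Prop;
  popen_full : popen (fun _ => True);
  popen_inter : forall U W, popen U -> popen W -> popen (fun x => U x /\ W x);
  popen_union : forall (I : Type) (F : I -> pcar -> Prop),
      (forall i, popen (F i)) -> popen (fun x => exists i, F i x);
  ple_refl : forall x, ple x x;
  ple_trans : forall x y z, ple x y -> ple y z -> ple x z;
  ple_antisym : forall x y, ple x y -> ple y x -> x = y;
  pcompact : forall (I : Type) (F : I -> pcar -> Prop),
      (forall i, popen (F i)) -> (forall x, exists i, F i x) ->
      exists n (g : 'I_n -> I), forall x, exists k, F (g k) x;
  psep : forall x y, ~ ple x y ->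
      exists U : pcar -> Prop,
        [/\ popen U, popen (fun z => ~ U z),
            (forall z w, U z -> ple z w -> U w), U x & ~ U y] }.
Arguments popen : clear implicits.
Arguments ple : clear implicits.

Definition pcont (X Y : pspace) (f : pcar X -> pcar Y) : Prop :=
  forall U, popen Y U -> popen X (fun x => U (f x)).
Definition pmono (X Y : pspace) (f : pcar X -> pcar Y) : Prop :=
  forall x y, ple X x y -> ple Y (f x) (f y).

Record pmor (X Y : pspace) := PMor {
  pfun : pcar X -> pcar Y;
  pfun_cont : pcont pfun;
  pfun_mono : pmono pfun }.

Definition psurjective (X Y : pspace) (f : pmor X Y) : Prop :=
  forall y, exists x, pfun f x = y.
Definition pembedding (X Y : pspace) (f : pmor X Y) : Prop :=
  (forall x x', ple X x x' <-> ple Y (pfun f x) (pfun f x')) /\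
  (forall U, popen X U -> exists W, popen Y W /\ forall x, U x <-> W (pfun f x)).

Record Pfunctor (C : category) := PFunctor {
  fobj : ob C -> pspace;
  fmap : forall a b, hom C a b -> pmor (fobj a) (fobj b);
  fmap_id : forall a x, pfun (fmap (idm a)) x = x;
  fmap_comp : forall a b c (f : hom C a b) (g : hom C b c) x,
      pfun (fmap (ccomp g f)) x = pfun (fmap g) (pfun (fmap f) x) }.
Arguments fmap {C} p {a b} _.

Definition Psurj (C : category) (F : Pfunctor C) a b (f : hom C a b) : Prop :=
  psurjective (fmap F f).
Definition Pemb (C : category) (F : Pfunctor C) a b (f : hom C a b) : Prop :=
  pembedding (fmap F f).

Definition is_bdl (T : Type) (m j : T -> T -> T) (b t : T) : Prop :=
  (forall x y z, m x (m y z) = m (m x y) z) /\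
  (forall x y z, j x (j y z) = j (j x y) z) /\
  (forall x y, m x y = m y x) /\
  (forall x y, j x y = j y x) /\
  (forall x y, m x (j x y) = x) /\
  (forall x y, j x (m x y) = x) /\
  (forall x y z, m x (j y z) = j (m x y) (m x z)) /\
  (forall x, m x t = x) /\
  (forall x, j x b = x).

Record bdl := BDL {
  lcar : Type;
  lmeet : lcar -> lcar -> lcar;
  ljoin : lcar -> lcar -> lcar;
  lbot : lcar;
  ltop : lcar;
  lax : is_bdl lmeet ljoin lbot ltop }.

Record signature := Signature { sop : Type; sar : sop -> nat }.

Record algebra (S : signature) := Algebra {
  acar : Type;
  aop : forall o : sop S, ('I_(sar o) -> acar) -> acar }.
Arguments aop {S} a o _.

Inductive term (S : signature) (V : Type) : Type :=
  | TVar : V -> term S V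
  | TApp : forall o : sop S, ('I_(sar o) -> term S V) -> term S V.

Fixpoint teval (S : signature) (V : Type) (A : algebra S) (v : V -> acar A)
    (t : term S V) : acar A :=
  match t with
  | TVar x => v x
  | TApp o ts => aop A o (fun i => teval v (ts i))
  end.

Definition models (S : signature) (E : term S nat -> term S nat -> Prop)
    (A : algebra S) : Prop :=
  forall t u, E t u -> forall v : nat -> acar A, teval v t = teval v u.

(* binary term operation: variable [false] is x, [true] is y *)
Definition top2 (S : signature) (A : algebra S) (t : term S bool)
    (x y : acar A) : acar A := teval (fun b : bool => if b then y else x) t.
Definition top0 (S : signature) (A : algebra S) (t : term S Empty_set) : acar A :=
  teval (fun e : Empty_set => match e with end) t.

Arguments top2 {S} A t x y.
Arguments top0 {S} A t.

(* A variety given by equations, with a term reduct in D. *)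
Record variety (S : signature) := Variety {
  veq : term S nat -> term S nat -> Prop;
  tmeet : term S bool;
  tjoin : term S bool;
  tbot : term S Empty_set;
  ttop : term S Empty_set;
  vreduct : forall A : algebra S, models veq A ->
      is_bdl (top2 A tmeet) (top2 A tjoin) (top0 A tbot) (top0 A ttop) }.

Record valg (S : signature) (V : variety S) := VAlg {
  valg_alg :> algebra S;
  valg_mod : models (veq V) valg_alg }.

Definition is_ahom (S : signature) (A B : algebra S) (f : acar A -> acar B) :=
  forall o xs, f (aop A o xs) = aop B o (fun i => f (xs i)).

Arguments is_ahom {S} A B f.

Record ahom (S : signature) (A B : algebra S) := AHom {
  afun : acar A -> acar B;
  afun_hom : is_ahom A B afun }.

Lemma ahom_id_proof (S : signature) (A : algebra S) : is_ahom A A (fun x : acar A => x).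
Proof. by []. Qed.
Definition ahom_id (S : signature) (A : algebra S) : ahom A A :=
  @AHom S A A _ (@ahom_id_proof S A).

Lemma ahom_comp_proof (S : signature) (A B C : algebra S) (g : ahom B C) (f : ahom A B) :
  is_ahom A C (fun x => afun g (afun f x)).
Proof. by move=> o xs; rewrite (afun_hom f) (afun_hom g). Qed.
Definition ahom_comp (S : signature) (A B C : algebra S) (g : ahom B C) (f : ahom A B)
  : ahom A C := @AHom S A C _ (@ahom_comp_proof S A B C g f).

Definition flat (S : signature) (V : variety S) (A : valg V) : bdl :=
  @BDL (acar A) (top2 A (tmeet V)) (top2 A (tjoin V)) (top0 A (tbot V))
       (top0 A (ttop V)) (@vreduct S V A (@valg_mod S V A)).

(* H(L) = D(L, 2): carrier, pointwise order, topology as subspace of 2^L *)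
Definition is_2hom (L : bdl) (h : lcar L -> bool) : Prop :=
  [/\ (forall a b, h (lmeet a b) = h a && h b),
      (forall a b, h (ljoin a b) = h a || h b),
      h (lbot L) = false & h (ltop L) = true].
Definition Hcar (L : bdl) : Type := {h : lcar L -> bool | is_2hom h}.
Definition Hle (L : bdl) (h h' : Hcar L) : Prop :=
  forall a, sval h a = true -> sval h' a = true.
(* open sets of the product topology restricted to H(L) *)
Definition Hopen (L : bdl) (U : Hcar L -> Prop) : Prop :=
  forall h, U h -> exists n (s : 'I_n -> lcar L),
    forall h' : Hcar L, (forall k, sval h' (s k) = sval h (s k)) -> U h'.

(* K(X) = P(X, 2): carrier (continuous order-preserving maps to 2);  *)
(* lattice operations are pointwise.                                   *)
Definition Kcar (X : pspace) : Type :=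
  {f : pcar X -> bool |
     [/\ popen X (fun x => f x = true), popen X (fun x => f x = false) &
         (forall x y, ple X x y -> f x = true -> f y = true)]}.

Record rpd (S : signature) (V : variety S) (C : category) (F : Pfunctor C) := RPD {
  Dob : valg V -> ob C;
  Dmap : forall A B : valg V, ahom A B -> hom C (Dob B) (Dob A);
  Eob : ob C -> valg V;
  Emap : forall x y, hom C x y -> ahom (Eob y) (Eob x);
  Dmap_id : forall A : valg V, Dmap (ahom_id A) = idm (Dob A);
  Dmap_comp : forall (A B B' : valg V) (f : ahom A B) (g : ahom B B'),
      Dmap (ahom_comp g f) = ccomp (Dmap f) (Dmap g);
  Emap_id : forall x a, afun (Emap (idm x)) a = a;
  Emap_comp : forall x y z (f : hom C x y) (g : hom C y z) a,
      afun (Emap (ccomp g f)) a = afun (Emap f) (afun (Emap g) a);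
  unit : forall A : valg V, ahom A (Eob (Dob A));
  unit_iso : forall A : valg V, exists g : ahom (Eob (Dob A)) A,
      (forall a, afun g (afun (unit A) a) = a) /\
      (forall b, afun (unit A) (afun g b) = b);
  unit_nat : forall (A B : valg V) (f : ahom A B) a,
      afun (Emap (Dmap f)) (afun (unit A) a) = afun (unit B) (afun f a);
  counit : forall x, hom C x (Dob (Eob x));
  counit_iso : forall x, is_iso (counit x);
  counit_nat : forall x y (phi : hom C x y),
      ccomp (Dmap (Emap phi)) (counit x) = ccomp (counit y) phi;
  (* flat o D = H o flat *)
  pD : forall A : valg V, pcar (fobj F (Dob A)) = Hcar (flat A);
  pD_le : forall (A : valg V) x y,
      ple _ x y <-> Hle (cast (pD A) x) (cast (pD A) y);
  pD_open : forall (A : valg V) (U : Hcar (flat A) -> Prop),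
      popen _ (fun x => U (cast (pD A) x)) <-> Hopen U;
  pD_map : forall (A B : valg V) (f : ahom A B) x a,
      sval (cast (pD A) (pfun (fmap F (Dmap f)) x)) a
      = sval (cast (pD B) x) (afun f a);
  (* flat o E = K o flat *)
  qE : forall x, lcar (flat (Eob x)) = Kcar (fobj F x);
  qE_meet : forall x a b pt,
      sval (cast (qE x) (lmeet a b)) pt
      = sval (cast (qE x) a) pt && sval (cast (qE x) b) pt;
  qE_join : forall x a b pt,
      sval (cast (qE x) (ljoin a b)) pt
      = sval (cast (qE x) a) pt || sval (cast (qE x) b) pt;
  qE_bot : forall x pt, sval (cast (qE x) (lbot _)) pt = false;
  qE_top : forall x pt, sval (cast (qE x) (ltop _)) pt = true;
  qE_map : forall x y (phi : hom C x y) a pt,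
      sval (cast (qE x) (afun (Emap phi) a)) pt
      = sval (cast (qE y) a) (pfun (fmap F phi) pt);
  (* e_A^flat = e_{A^flat}  (evaluation) *)
  unit_flat : forall (A : valg V) a x,
      sval (cast (qE (Dob A)) (afun (unit A) a)) x = sval (cast (pD A) x) a;
  (* eps_X^flat = eps_{X^flat}  (evaluation) *)
  counit_flat : forall x pt a,
      sval (cast (pD (Eob x)) (pfun (fmap F (counit x)) pt)) a
      = sval (cast (qE x) a) pt }.

(* Since D and E form a dual equivalence, everything can be done on the algebra
   side and transported back.  Existence: factor E phi through its image B in
   E x.  The corestriction E y -> B is onto, so its dual is an embedding of
   Priestley spaces; and by compactness every homomorphism from B to 2 is
   evaluation at a point of x (Priestley's prime filter argument), so
   x -> D B is onto.  Uniqueness: a surjection is orthogonal to an embedding of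
   Priestley spaces, so each E mu_i factors through the other; the two
   factorising homomorphisms are mutually inverse and transpose to gamma. *)
From mathcomp Require Import all_boot.
From Stdlib Require Import ProofIrrelevance FunctionalExtensionality.
From Stdlib Require Import PropExtensionality ClassicalEpsilon Classical.
Set Implicit Arguments. Unset Strict Implicit. Unset Printing Implicit Defensive.

Lemma cast_K (T U : Type) (p : T = U) (x : T) : cast (esym p) (cast p x) = x.
Proof. by case: U / p. Qed.

Lemma cast_Kv (T U : Type) (p : T = U) (y : U) : cast p (cast (esym p) y) = y.
Proof. by case: U / p y. Qed.

Lemma cast_inj (T U : Type) (p : T = U) : injective (cast p).
Proof. by case: U / p. Qed.

Lemma sig_eq (T : Type) (P : T -> Prop) (a b : {x | P x}) : sval a = sval b -> a = b.
Proof.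
case: a b => [x Px] [y Py] /= exy; subst y.
by rewrite (proof_irrelevance _ Px Py).
Qed.

Lemma sig_fun_ext (T U : Type) (P : (T -> U) -> Prop) (f g : {h | P h}) :
  sval f =1 sval g -> f = g.
Proof. by move=> fg; apply: sig_eq; apply: functional_extensionality. Qed.

Lemma ahom_ext (S : signature) (A B : algebra S) (f g : ahom A B) :
  afun f =1 afun g -> f = g.
Proof.
case: f g => [f fhom] [g ghom] /= /functional_extensionality fg; subst g.
by rewrite (proof_irrelevance _ fhom ghom).
Qed.

Lemma popen_ext (X : pspace) (U W : pcar X -> Prop) :
  popen X U -> (forall x, U x <-> W x) -> popen X W.
Proof.
move=> + UW; suff -> : U = W by [].
by apply: functional_extensionality => x; apply: propositional_extensionality.
Qed.

Lemma pembedding_inj (X Y : pspace) (f : pmor X Y) :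
  pembedding f -> injective (pfun f).
Proof.
move=> [fle _] x x' fxx'.
by apply: ple_antisym; apply/fle; rewrite fxx'; apply: ple_refl.
Qed.

Lemma pembedding_comp (X Y Z : pspace) (f : pmor X Y) (g : pmor Y Z)
    (h : pmor X Z) :
  pfun h =1 pfun g \o pfun f -> pembedding f -> pembedding g -> pembedding h.
Proof.
move=> hE [fle fopen] [gle gopen]; split=> [x x'|U /fopen [W [W_open UW]]].
  by rewrite !hE /= -gle.
have [W' [W'_open WW']] := gopen W W_open.
by exists W'; split=> // x; rewrite hE /= UW WW'.
Qed.

Lemma pembedding_section (X Y : pspace) (f : pmor X Y) (g : pmor Y X) :
  (forall x, pfun g (pfun f x) = x) -> pembedding f.
Proof.
move=> fK; split=> [x x'|U U_open].
  by split; [apply: pfun_mono | move=> /(pfun_mono g); rewrite !fK].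
exists (fun y => U (pfun g y)); split; first exact: (pfun_cont g).
by move=> x; rewrite fK.
Qed.

Lemma diagonal_fill (X Y Z1 Z2 : pspace) (f1 : pmor X Z1) (e1 : pmor Z1 Y)
    (f2 : pmor X Z2) (e2 : pmor Z2 Y) :
  pembedding e1 -> psurjective f2 ->
  (forall x, pfun e1 (pfun f1 x) = pfun e2 (pfun f2 x)) ->
  exists d : pmor Z2 Z1, forall x, pfun d (pfun f2 x) = pfun f1 x.
Proof.
move=> e1_emb f2_surj comm; have [e1le e1open] := e1_emb.
pose sec z := proj1_sig (constructive_indefinite_description _ (f2_surj z)).
have secK z : pfun f2 (sec z) = z.
  exact: proj2_sig (constructive_indefinite_description _ (f2_surj z)).
pose d z := pfun f1 (sec z).
have e1d z : pfun e1 (d z) = pfun e2 z by rewrite /d comm secK.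
have d_cont : pcont d.
  move=> U /e1open [W [W_open UW]].
  by apply: (popen_ext (pfun_cont e2 W_open)) => z; rewrite UW e1d.
have d_mono : pmono d.
  by move=> z z' zz'; apply/e1le; rewrite !e1d; apply: pfun_mono.
exists (PMor d_cont d_mono) => x /=.
by apply: (pembedding_inj e1_emb); rewrite e1d comm.
Qed.

Lemma Kcomp_subproof (X Y : pspace) (d : pmor X Y) (u : Kcar Y) :
  [/\ popen X (fun x => sval u (pfun d x) = true),
      popen X (fun x => sval u (pfun d x) = false) &
      forall x y, ple X x y -> sval u (pfun d x) = true -> sval u (pfun d y) = true].
Proof.
case: u => u [u_true u_false u_mono] /=.
split; [exact: (pfun_cont d u_true) | exact: (pfun_cont d u_false) |].
by move=> x y /(pfun_mono d); apply: u_mono.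
Qed.

Definition Kcomp (X Y : pspace) (d : pmor X Y) (u : Kcar Y) : Kcar X :=
  exist _ _ (Kcomp_subproof d u).

Section TwoHomEvaluation.
Variables (X : pspace) (L : bdl) (k : lcar L -> Kcar X).
Hypothesis k_meet :
  forall a b x, sval (k (lmeet a b)) x = sval (k a) x && sval (k b) x.
Hypothesis k_join :
  forall a b x, sval (k (ljoin a b)) x = sval (k a) x || sval (k b) x.
Hypothesis k_inj : injective k.

(* m is the meet of the g i that h keeps, j the join of those it drops. *)
Lemma two_hom_separation (h : Hcar L) n (g : 'I_n -> lcar L) :
  exists m j, [/\ sval h m, ~~ sval h j &
    forall x i, sval (k m) x -> sval (k (g i)) x = ~~ sval h (g i) -> sval (k j) x].
Proof.
case: (svalP h) => h_meet h_join h_bot h_top.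
elim: n g => [|n IHn] g.
  by exists (ltop L), (lbot L); rewrite h_top h_bot; split=> // x [].
have [m [j [hm hj mj]]] := IHn (fun i => g (lift ord0 i)).
case hg0: (sval h (g ord0)).
  exists (lmeet m (g ord0)), j; split=> //; first by rewrite h_meet hm hg0.
  move=> x i; rewrite k_meet => /andP[kmx kg0x].
  by case: (unliftP ord0 i) => [i' ->|->]; [apply: mj | rewrite hg0 kg0x].
exists m, (ljoin j (g ord0)); split=> //; first by rewrite h_join negb_or hj hg0.
move=> x i kmx; rewrite k_join.
case: (unliftP ord0 i) => [i' ->|->]; first by move=> /(mj x i' kmx) ->.
by rewrite hg0 /= => ->; rewrite orbT.
Qed.

Lemma two_hom_evaluation (h : Hcar L) : exists x, forall a, sval h a = sval (k a) x.
Proof.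
apply: NNPP => no_point.
have cover x : exists a, sval (k a) x = ~~ sval h a.
  apply: NNPP => cover_x; apply: no_point; exists x => a.
  apply: NNPP => ne; apply: cover_x; exists a.
  by move: ne; case: (sval h a); case: (sval (k a) x).
have cover_open a : popen X (fun x => sval (k a) x = ~~ sval h a).
  by case: (svalP (k a)) => k_true k_false _; case: (sval h a).
have [n [g cover_g]] := pcompact cover_open cover.
have [m [j [hm hj mj]]] := two_hom_separation h g.
have mjm : lmeet m j = m.
  apply: k_inj; apply: sig_fun_ext => x; rewrite k_meet.
  case kmx: (sval (k m) x) => //=.
  by have [i /(mj x i kmx)] := cover_g x.
case: (svalP h) => h_meet _ _ _.
by move: hm; rewrite -mjm h_meet (negbTE hj) andbF.
Qed.

End TwoHomEvaluation.

Section Homomorphisms.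
Variable S : signature.

Lemma ahom_teval (A B : algebra S) (f : ahom A B) (W : Type) (v : W -> acar A)
    (t : term S W) :
  afun f (teval v t) = teval (afun f \o v) t.
Proof.
elim: t => [w|o ts IHts] //=; rewrite afun_hom; congr aop.
by apply: functional_extensionality => i; apply: IHts.
Qed.

Lemma ahom_top2 (A B : algebra S) (f : ahom A B) (t : term S bool) a b :
  afun f (top2 A t a b) = top2 B t (afun f a) (afun f b).
Proof.
by rewrite /top2 ahom_teval; congr teval; apply: functional_extensionality; case.
Qed.

Lemma ahom_of_injective_factor (A B B' : algebra S) (m : ahom B B')
    (f : ahom A B') (g : acar A -> acar B) :
  injective (afun m) -> (forall a, afun m (g a) = afun f a) -> is_ahom A B g.
Proof.
move=> m_inj gf o xs; apply: m_inj.
rewrite gf !afun_hom; congr aop.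
by apply: functional_extensionality => i; rewrite gf.
Qed.

Section Image.
Variables (V : variety S) (A : algebra S) (B : valg V) (f : ahom A B).

Definition image_car := {b : acar B | exists a, afun f a = b}.

Lemma image_op_subproof o (xs : 'I_(sar o) -> image_car) :
  exists a, afun f a = aop B o (fun i => sval (xs i)).
Proof.
pose pre i := proj1_sig (constructive_indefinite_description _ (proj2_sig (xs i))).
have preK i : afun f (pre i) = sval (xs i).
  exact: proj2_sig (constructive_indefinite_description _ (proj2_sig (xs i))).
exists (aop A o pre); rewrite afun_hom; congr aop.
exact: functional_extensionality.
Qed.

Definition image_alg : algebra S :=
  @Algebra S image_car (fun o xs => exist _ _ (image_op_subproof xs)).

Lemma image_incl_hom : is_ahom image_alg B (@sval _ _).
Proof. by []. Qed.

Lemma image_models : models (veq V) image_alg.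
Proof.
move=> t u tu v; apply: sig_eq.
have incl_teval := ahom_teval (AHom image_incl_hom) v.
by move: (incl_teval t) (incl_teval u) => /= -> ->; apply: (@valg_mod _ _ B _ _ tu).
Qed.

Definition image_valg : valg V := VAlg image_models.

Definition image_incl : ahom image_valg B := AHom image_incl_hom.

Lemma image_incl_inj : injective (afun image_incl).
Proof. by move=> b b'; apply: sig_eq. Qed.

Lemma image_corestr_hom :
  is_ahom A image_valg (fun a => exist _ (afun f a) (ex_intro _ a erefl)).
Proof. by move=> o xs; apply: sig_eq; apply: afun_hom. Qed.

Definition image_corestr : ahom A image_valg := AHom image_corestr_hom.

Lemma image_corestr_surj b : exists a, afun image_corestr a = b.
Proof. by case: b => b [a fab]; exists a; apply: sig_eq. Qed.

Lemma image_factor : ahom_comp image_incl image_corestr = f.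
Proof. exact: ahom_ext. Qed.

End Image.
End Homomorphisms.

Section Duality.
Variables (S : signature) (V : variety S) (C : category) (F : Pfunctor C).
Variable R : rpd V F.

Definition counit_inv (x : ob C) : hom C (Dob R (Eob R x)) x :=
  proj1_sig (constructive_indefinite_description _ (counit_iso R x)).

Lemma counit_invK x : ccomp (counit_inv x) (counit R x) = idm x.
Proof. by rewrite /counit_inv; case: constructive_indefinite_description => g []. Qed.

Lemma counitK x : ccomp (counit R x) (counit_inv x) = idm _.
Proof. by rewrite /counit_inv; case: constructive_indefinite_description => g []. Qed.

Definition transpose (z z' : ob C) (g : ahom (Eob R z) (Eob R z')) : hom C z' z :=
  ccomp (counit_inv z) (ccomp (Dmap R g) (counit R z')).

Lemma transpose_Emap (z z' : ob C) (phi : hom C z z') : transpose (Emap R phi) = phi.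
Proof. by rewrite /transpose counit_nat comp_assoc counit_invK comp_id_l. Qed.

Lemma transpose_id z : transpose (ahom_id (Eob R z)) = idm z.
Proof. by rewrite /transpose Dmap_id comp_id_l counit_invK. Qed.

Lemma transpose_comp z1 z2 z3 (f : ahom (Eob R z1) (Eob R z2))
    (g : ahom (Eob R z2) (Eob R z3)) :
  transpose (ahom_comp g f) = ccomp (transpose f) (transpose g).
Proof.
rewrite /transpose Dmap_comp -!comp_assoc.
by rewrite (comp_assoc (counit R z2)) counitK comp_id_l.
Qed.

Definition Kval (x : ob C) (a : acar (Eob R x)) : Kcar (fobj F x) := cast (qE R x) a.

Lemma Kval_inj x : injective (@Kval x).
Proof. exact: cast_inj. Qed.

Lemma Emap_inj x z (mu : hom C x z) : Psurj F mu -> injective (afun (Emap R mu)).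
Proof.
move=> mu_surj a b Eab; apply: Kval_inj; apply: sig_fun_ext => pt.
by have [w <-] := mu_surj pt; rewrite /Kval -!qE_map Eab.
Qed.

Lemma Pemb_counit_inv x : Pemb F (counit_inv x).
Proof.
apply: (pembedding_section (g := fmap F (counit R x))) => w.
by rewrite -fmap_comp counitK fmap_id.
Qed.

Lemma Pemb_Dmap (A B : valg V) (q : ahom A B) :
  (forall b, exists a, afun q a = b) -> Pemb F (Dmap R q).
Proof.
move=> q_surj.
pose sec b := proj1_sig (constructive_indefinite_description _ (q_surj b)).
have secK b : afun q (sec b) = b.
  exact: proj2_sig (constructive_indefinite_description _ (q_surj b)).
pose Dq := pfun (fmap F (Dmap R q)).
have Dq_eval z a : sval (cast (pD R A) (Dq z)) a = sval (cast (pD R B) z) (afun q a).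
  exact: pD_map.
split=> [z z'|U U_open].
  split; first exact: pfun_mono.
  move=> /pD_le Dqzz'; apply/pD_le => b.
  by rewrite -(secK b) -!Dq_eval; apply: Dqzz'.
pose U0 (h : Hcar (flat B)) := U (cast (esym (pD R B)) h).
have U0_open : Hopen U0.
  by apply/pD_open; apply: (popen_ext U_open) => z; rewrite /U0 cast_K.
pose W (h : Hcar (flat A)) := exists n (s : 'I_n -> lcar (flat B)),
  forall h', (forall i, sval h' (s i) = sval h (sec (s i))) -> U0 h'.
have W_open : Hopen W.
  move=> h [n [s Ws]]; exists n, (fun i => sec (s i)) => h' h'h.
  by exists n, s => h'' h''h'; apply: Ws => i; rewrite h''h' h'h.
exists (fun z => W (cast (pD R A) z)); split; first by apply/pD_open.
move=> z; split=> [Uz|[n [s Ws]]].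
  have [|n [s Us]] := U0_open (cast (pD R B) z); first by rewrite /U0 cast_K.
  by exists n, s => h' h'z; apply: Us => i; rewrite h'z Dq_eval secK.
have : U0 (cast (pD R B) z) by apply: Ws => i; rewrite Dq_eval secK.
by rewrite /U0 cast_K.
Qed.

Lemma Psurj_Dmap_counit x (A : valg V) (m : ahom A (Eob R x)) :
  injective (afun m) -> Psurj F (ccomp (Dmap R m) (counit R x)).
Proof.
move=> m_inj z.
pose k (a : lcar (flat A)) := Kval (afun m a).
have k_inj : injective k by move=> a b /Kval_inj /m_inj.
have k_meet a b w : sval (k (lmeet a b)) w = sval (k a) w && sval (k b) w.
  by rewrite /k /Kval /= ahom_top2; apply: qE_meet.
have k_join a b w : sval (k (ljoin a b)) w = sval (k a) w || sval (k b) w.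
  by rewrite /k /Kval /= ahom_top2; apply: qE_join.
have [w hw] := two_hom_evaluation k_meet k_join k_inj (cast (pD R A) z).
exists w; apply: (@cast_inj _ _ (pD R A)); apply: sig_fun_ext => a.
by rewrite /= fmap_comp pD_map counit_flat hw.
Qed.

Lemma Emap_factor x y z1 z2 (mu1 : hom C x z1) (psi1 : hom C z1 y)
    (mu2 : hom C x z2) (psi2 : hom C z2 y) :
  ccomp psi1 mu1 = ccomp psi2 mu2 -> Pemb F psi1 -> Psurj F mu2 ->
  exists g : ahom (Eob R z1) (Eob R z2),
    forall a, afun (Emap R mu2) (afun g a) = afun (Emap R mu1) a.
Proof.
move=> comm psi1_emb mu2_surj.
have [d dmu2] : exists d : pmor (fobj F z2) (fobj F z1),
    forall w, pfun d (pfun (fmap F mu2) w) = pfun (fmap F mu1) w.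
  apply: (diagonal_fill (f1 := fmap F mu1) (e2 := fmap F psi2) psi1_emb mu2_surj) => w.
  by rewrite -!fmap_comp comm.
pose g a := cast (esym (qE R z2)) (Kcomp d (Kval a)).
have gP a : afun (Emap R mu2) (g a) = afun (Emap R mu1) a.
  apply: Kval_inj; apply: sig_fun_ext => w.
  by rewrite /Kval !qE_map cast_Kv /= dmu2.
by exists (AHom (ahom_of_injective_factor (Emap_inj mu2_surj) gP)).
Qed.

Lemma factorisation_exists x y (phi : hom C x y) :
  exists (z : ob C) (mu : hom C x z) (psi : hom C z y),
    ccomp psi mu = phi /\ Psurj F mu /\ Pemb F psi.
Proof.
pose incl := image_incl (Emap R phi); pose corestr := image_corestr (Emap R phi).
exists (Dob R (image_valg (Emap R phi))), (ccomp (Dmap R incl) (counit R x)),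
  (ccomp (counit_inv y) (Dmap R corestr)); split; [|split].
- rewrite -comp_assoc (comp_assoc (Dmap R corestr)) -Dmap_comp image_factor.
  exact: transpose_Emap.
- apply: Psurj_Dmap_counit; exact: image_incl_inj.
- apply: (pembedding_comp (f := fmap F (Dmap R corestr))
                           (g := fmap F (counit_inv y))).
  + exact: fmap_comp.
  + apply: Pemb_Dmap; exact: image_corestr_surj.
  + exact: Pemb_counit_inv.
Qed.

Lemma factorisation_unique x y (phi : hom C x y)
    z1 (mu1 : hom C x z1) (psi1 : hom C z1 y)
    z2 (mu2 : hom C x z2) (psi2 : hom C z2 y) :
  ccomp psi1 mu1 = phi -> Psurj F mu1 -> Pemb F psi1 ->
  ccomp psi2 mu2 = phi -> Psurj F mu2 -> Pemb F psi2 ->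
  exists gamma : hom C z1 z2,
    is_iso gamma /\ ccomp gamma mu1 = mu2 /\ ccomp psi2 gamma = psi1.
Proof.
move=> fac1 mu1_surj psi1_emb fac2 mu2_surj psi2_emb.
have [g12 g12P] := Emap_factor (etrans fac1 (esym fac2)) psi1_emb mu2_surj.
have [g21 g21P] := Emap_factor (etrans fac2 (esym fac1)) psi2_emb mu1_surj.
have g21_mu1 : ahom_comp (Emap R mu1) g21 = Emap R mu2 by apply: ahom_ext.
have g21_psi2 : ahom_comp g21 (Emap R psi2) = Emap R psi1.
  apply: ahom_ext => a /=; apply: (Emap_inj mu1_surj).
  by rewrite g21P -!Emap_comp fac1 fac2.
have g21g12 : ahom_comp g21 g12 = ahom_id _.
  by apply: ahom_ext => a /=; apply: (Emap_inj mu1_surj); rewrite g21P g12P.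
have g12g21 : ahom_comp g12 g21 = ahom_id _.
  by apply: ahom_ext => a /=; apply: (Emap_inj mu2_surj); rewrite g12P g21P.
exists (transpose g21); split; [|split].
- by exists (transpose g12); rewrite -!transpose_comp g21g12 g12g21 !transpose_id.
- by rewrite -(transpose_Emap mu1) -transpose_comp g21_mu1 transpose_Emap.
- by rewrite -(transpose_Emap psi2) -transpose_comp g21_psi2 transpose_Emap.
Qed.

End Duality.

Theorem lemma2p9 (S : signature) (V : variety S) (C : category) (F : Pfunctor C)
    (R : rpd V F) :
  (forall (x y : ob C) (phi : hom C x y),
     exists (z : ob C) (mu : hom C x z) (psi : hom C z y),
       ccomp psi mu = phi /\ Psurj F mu /\ Pemb F psi) /\
  (forall (x y : ob C) (phi : hom C x y)
          (z1 : ob C) (mu1 : hom C x z1) (psi1 : hom C z1 y)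
          (z2 : ob C) (mu2 : hom C x z2) (psi2 : hom C z2 y),
     ccomp psi1 mu1 = phi -> Psurj F mu1 -> Pemb F psi1 ->
     ccomp psi2 mu2 = phi -> Psurj F mu2 -> Pemb F psi2 ->
     exists gamma : hom C z1 z2,
       is_iso gamma /\ ccomp gamma mu1 = mu2 /\ ccomp psi2 gamma = psi1).
Proof.
split; first exact: (factorisation_exists R).
exact: (factorisation_unique R).
Qed.
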